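(* Let $T$ be a complete theory and let $\varphi(\overline{x})$ be a $T$-formula having only finitely many solutions (in a model of $T$). Then $\varphi(\overline{x})$ is binarizable.
   Context: An expansion of a complete theory $T$ is a complete theory $T'$ in a language containing that of $T$ with $T\subseteq T'$. A $T$-formula $\varphi(\overline{x})$ is $n$-aritizable if $T$ has an expansion $T'$ such that $\varphi(\overline{x})$ is $T'$-equivalent to a Boolean combination of $T'$-formulas with $n$ free variables. Binarizable means $2$-aritizable. *)

From Stdlib Require Import List Arith Fin.
Import ListNotations.

Record language : Type := Language {
  Func : Type;
  Rel : Type;
  farity : Func -> nat;
  rarity : Rel -> nat
}.

Inductive term (L : language) : Type :=
| var : nat -> term L
| app : forall f : Func L, (Fin.t (farity L f) -> term L) -> term L.
Arguments var {L} _.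
Arguments app {L} _ _.

(* First-order formulas with equality; variable 0 is bound by Ex/All. *)
Inductive formula (L : language) : Type :=
| Fal : formula L
| Tru : formula L
| Equ : term L -> term L -> formula L
| Atom : forall r : Rel L, (Fin.t (rarity L r) -> term L) -> formula L
| Not : formula L -> formula L
| And : formula L -> formula L -> formula L
| Or : formula L -> formula L -> formula L
| Imp : formula L -> formula L -> formula L
| Ex : formula L -> formula L
| All : formula L -> formula L.
Arguments Fal {L}. Arguments Tru {L}. Arguments Equ {L} _ _.
Arguments Atom {L} _ _. Arguments Not {L} _. Arguments And {L} _ _.
Arguments Or {L} _ _. Arguments Imp {L} _ _. Arguments Ex {L} _.
Arguments All {L} _.

Definition shiftP (P : nat -> Prop) (k : nat) : Prop :=
  match k with 0 => True | S j => P j end.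

Fixpoint term_fv_in {L} (P : nat -> Prop) (t : term L) : Prop :=
  match t with
  | var n => P n
  | app f args => forall i, term_fv_in P (args i)
  end.

Fixpoint fv_in {L} (P : nat -> Prop) (phi : formula L) : Prop :=
  match phi with
  | Fal | Tru => True
  | Equ t1 t2 => term_fv_in P t1 /\ term_fv_in P t2
  | Atom r args => forall i, term_fv_in P (args i)
  | Not a => fv_in P a
  | And a b | Or a b | Imp a b => fv_in P a /\ fv_in P b
  | Ex a | All a => fv_in (shiftP P) a
  end.

Definition sentence {L} (phi : formula L) : Prop := fv_in (fun _ => False) phi.

(* Structures (nonempty domains). *)
Record structure (L : language) : Type := Structure {
  dom : Type;
  point : dom;
  finterp : forall f : Func L, (Fin.t (farity L f) -> dom) -> dom;
  rinterp : forall r : Rel L, (Fin.t (rarity L r) -> dom) -> Prop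
}.
Arguments dom {L} _. Arguments finterp {L} _ _ _. Arguments rinterp {L} _ _ _.

Definition scons {A} (a : A) (e : nat -> A) (k : nat) : A :=
  match k with 0 => a | S j => e j end.

Fixpoint eval {L} (M : structure L) (e : nat -> dom M) (t : term L) : dom M :=
  match t with
  | var n => e n
  | app f args => finterp M f (fun i => eval M e (args i))
  end.

Fixpoint sat {L} (M : structure L) (e : nat -> dom M) (phi : formula L) : Prop :=
  match phi with
  | Fal => False
  | Tru => True
  | Equ t1 t2 => eval M e t1 = eval M e t2
  | Atom r args => rinterp M r (fun i => eval M e (args i))
  | Not a => ~ sat M e a
  | And a b => sat M e a /\ sat M e b
  | Or a b => sat M e a \/ sat M e b
  | Imp a b => sat M e a -> sat M e b
  | Ex a => exists x, sat M (scons x e) a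
  | All a => forall x, sat M (scons x e) a
  end.

(* Theories: sets of formulas (required to be sentences for completeness). *)
Definition theory (L : language) := formula L -> Prop.

Definition is_model {L} (M : structure L) (T : theory L) : Prop :=
  forall s, T s -> forall e, sat M e s.

Definition entails {L} (T : theory L) (phi : formula L) : Prop :=
  forall M : structure L, is_model M T -> forall e, sat M e phi.

Definition complete {L} (T : theory L) : Prop :=
  (forall s, T s -> sentence s) /\
  (exists M : structure L, is_model M T) /\
  (forall s, sentence s -> entails T s \/ entails T (Not s)).

(* The language L enlarged by the new symbols of E (every expansion of the
   language is, up to renaming of symbols, of this form). *)
Definition ext (L E : language) : language :=
  Language (Func L + Func E) (Rel L + Rel E)
    (fun s => match s with inl f => farity L f | inr g => farity E g end)
    (fun s => match s with inl r => rarity L r | inr q => rarity E q end).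

Fixpoint tlift {L E} (t : term L) : term (ext L E) :=
  match t with
  | var n => var n
  | app f args => @app (ext L E) (inl f) (fun i => tlift (args i))
  end.

Fixpoint flift {L E} (phi : formula L) : formula (ext L E) :=
  match phi with
  | Fal => Fal
  | Tru => Tru
  | Equ t1 t2 => Equ (tlift t1) (tlift t2)
  | Atom r args => @Atom (ext L E) (inl r) (fun i => tlift (args i))
  | Not a => Not (flift a)
  | And a b => And (flift a) (flift b)
  | Or a b => Or (flift a) (flift b)
  | Imp a b => Imp (flift a) (flift b)
  | Ex a => Ex (flift a)
  | All a => All (flift a)
  end.

Inductive bool_comb {L} (A : formula L -> Prop) : formula L -> Prop :=
| bc_atom : forall phi, A phi -> bool_comb A phi
| bc_fal : bool_comb A Fal
| bc_tru : bool_comb A Tru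
| bc_not : forall a, bool_comb A a -> bool_comb A (Not a)
| bc_and : forall a b, bool_comb A a -> bool_comb A b -> bool_comb A (And a b)
| bc_or : forall a b, bool_comb A a -> bool_comb A b -> bool_comb A (Or a b)
| bc_imp : forall a b, bool_comb A a -> bool_comb A b -> bool_comb A (Imp a b).

(* Formulas with (at most) n free variables. *)
Definition has_n_free_vars {L} (n : nat) (th : formula L) : Prop :=
  exists l : list nat, length l <= n /\ fv_in (fun k => In k l) th.

Definition equiv_in {L} (T : theory L) (phi psi : formula L) : Prop :=
  forall M : structure L, is_model M T -> forall e, sat M e phi <-> sat M e psi.

Definition aritizable {L} (n : nat) (T : theory L) (phi : formula L) : Prop :=
  exists (E : language) (T' : theory (ext L E)) (psi : formula (ext L E)),
    complete T' /\
    (forall s, T s -> T' (flift s)) /\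
    bool_comb (has_n_free_vars n) psi /\
    equiv_in T' (flift phi) psi.

Definition binarizable {L} (T : theory L) (phi : formula L) : Prop :=
  aritizable 2 T phi.

(* Fix a model M of T in which phi has finitely many solutions, and name every
   element a of M by a new unary predicate P_a interpreted as {a}. In this
   expansion phi(x_0, ..., x_(n-1)) is equivalent to the finite disjunction,
   over its solutions s, of the conjunctions P_(s 0)(x_0) /\ ... /\
   P_(s (n-1))(x_(n-1)). The universal closure of this equivalence is a sentence
   true in the expansion, so it holds in every model of the complete theory of
   the expansion, which extends T. *)
From Stdlib Require Import List Arith Lia Classical FunctionalExtensionality.
Import ListNotations.

Lemma term_fv_in_mono {L} (P Q : nat -> Prop) (t : term L) :
  (forall k, P k -> Q k) -> term_fv_in P t -> term_fv_in Q t.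
Proof. intros HPQ; induction t; simpl; auto. Qed.

Lemma fv_in_mono {L} (phi : formula L) :
  forall P Q : nat -> Prop, (forall k, P k -> Q k) -> fv_in P phi -> fv_in Q phi.
Proof.
  induction phi; intros P Q HPQ Hphi; simpl in *;
    try (destruct Hphi; split); eauto using term_fv_in_mono.
  all: apply (IHphi (shiftP P)); [intros [|k]; simpl; auto | exact Hphi].
Qed.

Lemma eval_fv_agree {L} (M : structure L) P (e1 e2 : nat -> dom M) t :
  term_fv_in P t -> (forall k, P k -> e1 k = e2 k) -> eval M e1 t = eval M e2 t.
Proof.
  intros Ht He; induction t; simpl in *; auto.
  f_equal; apply functional_extensionality; auto.
Qed.

Lemma sat_fv_agree {L} (M : structure L) phi :
  forall P (e1 e2 : nat -> dom M), fv_in P phi ->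
  (forall k, P k -> e1 k = e2 k) -> (sat M e1 phi <-> sat M e2 phi).
Proof.
  induction phi; intros P e1 e2 Hphi He; simpl in *;
    try (assert (Hx : forall x, sat M (scons x e1) phi <-> sat M (scons x e2) phi)
           by (intro x; apply (IHphi (shiftP P)); auto; intros [|k]; simpl; auto)).
  - tauto.
  - tauto.
  - destruct Hphi; erewrite !(eval_fv_agree M P e1 e2) by eauto; tauto.
  - replace (fun i => eval M e1 (t i)) with (fun i => eval M e2 (t i));
      [tauto | apply functional_extensionality; intro i].
    symmetry; eapply eval_fv_agree; eauto.
  - rewrite (IHphi P e1 e2 Hphi He); tauto.
  - destruct Hphi as [H1 H2]; rewrite (IHphi1 P e1 e2 H1 He), (IHphi2 P e1 e2 H2 He); tauto.
  - destruct Hphi as [H1 H2]; rewrite (IHphi1 P e1 e2 H1 He), (IHphi2 P e1 e2 H2 He); tauto.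
  - destruct Hphi as [H1 H2]; rewrite (IHphi1 P e1 e2 H1 He), (IHphi2 P e1 e2 H2 He); tauto.
  - split; intros [x Hx1]; exists x; apply Hx; auto.
  - split; intros Hx1 x; apply Hx; auto.
Qed.

Lemma sentence_sat_any_env {L} (M : structure L) s (e e' : nat -> dom M) :
  sentence s -> sat M e s -> sat M e' s.
Proof. intros Hs; apply (sat_fv_agree M s (fun _ => False)); tauto. Qed.

Definition theory_of {L} (M : structure L) : theory L :=
  fun s => sentence s /\ forall e, sat M e s.

Lemma theory_of_model {L} (M : structure L) : is_model M (theory_of M).
Proof. intros s [_ Hs]; exact Hs. Qed.

Lemma theory_of_complete {L} (M : structure L) : complete (theory_of M).
Proof.
  split; [intros s [Hs _]; exact Hs | split; [exists M; apply theory_of_model |]].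
  intros s Hs; destruct (classic (forall e, sat M e s)) as [Htrue | Hfalse].
  - left; intros N HN e; apply HN; split; auto.
  - right; intros N HN e; apply HN; split; [exact Hs |].
    intros e1 He1; apply Hfalse; intro e2.
    exact (sentence_sat_any_env M s e1 e2 Hs He1).
Qed.

Fixpoint all_n {L} (k : nat) (b : formula L) : formula L :=
  match k with 0 => b | S k => All (all_n k b) end.

Fixpoint prepend_env {A} (k : nat) (f e : nat -> A) : nat -> A :=
  match k with 0 => e | S k => prepend_env k f (scons (f k) e) end.

Lemma prepend_env_high {A} k (f : nat -> A) :
  forall e m, prepend_env k f e (k + m) = e m.
Proof.
  induction k; intros e m; simpl; auto.
  replace (S (k + m)) with (k + S m) by lia; rewrite IHk; reflexivity.
Qed.

Lemma prepend_env_low {A} k (f : nat -> A) :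
  forall e j, j < k -> prepend_env k f e j = f j.
Proof.
  induction k; intros e j Hj; simpl; [lia |].
  destruct (Nat.eq_dec j k) as [-> | Hjk]; [| apply IHk; lia].
  pose proof (prepend_env_high k f (scons (f k) e) 0) as Hk.
  rewrite Nat.add_0_r in Hk; exact Hk.
Qed.

Lemma sat_all_n_elim {L} (M : structure L) k b :
  forall e, sat M e (all_n k b) -> forall f, sat M (prepend_env k f e) b.
Proof. induction k; simpl; auto. Qed.

Lemma sat_all_n_intro {L} (M : structure L) k b :
  (forall e, sat M e b) -> forall e, sat M e (all_n k b).
Proof. induction k; simpl; auto. Qed.

Lemma fv_in_all_n {L} k (b : formula L) :
  forall P, fv_in (fun j => j < k \/ P (j - k)) b -> fv_in P (all_n k b).
Proof.
  induction k; intros P Hb; simpl.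
  - eapply fv_in_mono; [| exact Hb]; intros j [Hj | Hj]; [lia |].
    rewrite Nat.sub_0_r in Hj; exact Hj.
  - apply IHk; eapply fv_in_mono; [| exact Hb]; intros j [Hj | Hj].
    + destruct (Nat.eq_dec j k) as [-> | ]; [right; rewrite Nat.sub_diag | left]; simpl; auto; lia.
    + destruct (lt_dec j k) as [Hjk | Hkj]; [left; exact Hjk |]; right.
      destruct (Nat.eq_dec j k) as [-> | ]; [rewrite Nat.sub_diag; simpl; auto |].
      replace (j - k) with (S (j - S k)) by lia; exact Hj.
Qed.

Definition Iff {L} (a b : formula L) : formula L := And (Imp a b) (Imp b a).

Lemma equiv_in_theory_of {L} (M : structure L) n (a b : formula L) :
  fv_in (fun j => j < n) a -> fv_in (fun j => j < n) b ->
  (forall e, sat M e a <-> sat M e b) -> equiv_in (theory_of M) a b.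
Proof.
  intros Ha Hb Hab N HN e.
  assert (Hfv : fv_in (fun j => j < n) (Iff a b)) by (simpl; tauto).
  assert (Hclosure : theory_of M (all_n n (Iff a b))).
  { split.
    - apply fv_in_all_n; eapply fv_in_mono; [| exact Hfv]; auto.
    - apply sat_all_n_intro; intro e'; simpl; specialize (Hab e'); tauto. }
  pose proof (sat_all_n_elim N n _ e (HN _ Hclosure e) e) as Hiff.
  rewrite (sat_fv_agree N _ _ (prepend_env n e e) e Hfv) in Hiff
    by (intros k Hk; apply prepend_env_low; exact Hk).
  simpl in Hiff; tauto.
Qed.

Definition expand {L E} (M : structure L)
    (fE : forall g : Func E, (Fin.t (farity E g) -> dom M) -> dom M)
    (rE : forall q : Rel E, (Fin.t (rarity E q) -> dom M) -> Prop) :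
    structure (ext L E) :=
  Structure (ext L E) (dom M) (point L M)
    (fun s => match s return (Fin.t (farity (ext L E) s) -> dom M) -> dom M with
              | inl f => finterp M f
              | inr g => fE g
              end)
    (fun s => match s return (Fin.t (rarity (ext L E) s) -> dom M) -> Prop with
              | inl r => rinterp M r
              | inr q => rE q
              end).

Lemma eval_tlift {L E} (M : structure L) fE rE e (t : term L) :
  eval (expand (E := E) M fE rE) e (tlift t) = eval M e t.
Proof.
  induction t; simpl; auto.
  f_equal; apply functional_extensionality; auto.
Qed.

Lemma sat_flift {L E} (M : structure L) fE rE (phi : formula L) :
  forall e, sat (expand (E := E) M fE rE) e (flift phi) <-> sat M e phi.
Proof.
  induction phi; intro e; simpl; try tauto.
  - rewrite !eval_tlift; tauto.
  - replace (fun i => eval (expand M fE rE) e (tlift (t i)))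
      with (fun i => eval M e (t i)); [tauto |].
    apply functional_extensionality; intro i; symmetry; apply eval_tlift.
  - rewrite IHphi; tauto.
  - rewrite IHphi1, IHphi2; tauto.
  - rewrite IHphi1, IHphi2; tauto.
  - rewrite IHphi1, IHphi2; tauto.
  - split; intros [x Hx]; exists x; apply IHphi; auto.
  - split; intros Hx x; apply IHphi; auto.
Qed.

Lemma term_fv_in_tlift {L E} P (t : term L) :
  term_fv_in P t -> term_fv_in P (tlift (E := E) t).
Proof. induction t; simpl; auto. Qed.

Lemma fv_in_flift {L E} (phi : formula L) :
  forall P, fv_in P phi -> fv_in P (flift (E := E) phi).
Proof.
  induction phi; intros P Hphi; simpl in *;
    try (destruct Hphi; split); auto using term_fv_in_tlift.
Qed.

Lemma theory_of_expand_extends {L E} (T : theory L) (M : structure L) fE rE :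
  (forall s, T s -> sentence s) -> is_model M T ->
  forall s, T s -> theory_of (expand (E := E) M fE rE) (flift s).
Proof.
  intros HT HM s Hs; split.
  - apply fv_in_flift, HT, Hs.
  - intro e; apply sat_flift, HM, Hs.
Qed.

Definition names (D : Type) : language :=
  Language Empty_set D (fun g : Empty_set => match g with end) (fun _ => 1).

Definition expand_names {L} (M : structure L) : structure (ext L (names (dom M))) :=
  expand (E := names (dom M)) M (fun g : Empty_set => match g with end)
    (fun a args => args Fin.F1 = a).

Definition is_name {L} (D : Type) (i : nat) (a : D) : formula (ext L (names D)) :=
  @Atom (ext L (names D)) (inr a) (fun _ => var i).

Fixpoint tuple_is {L} (D : Type) (k : nat) (s : nat -> D) : formula (ext L (names D)) :=
  match k with
  | 0 => Tru
  | S k => And (tuple_is D k s) (is_name D k (s k))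
  end.

Definition tuple_among {L} (D : Type) (n : nat) (sols : list (nat -> D)) :
    formula (ext L (names D)) :=
  fold_right (fun s acc => Or (tuple_is D n s) acc) Fal sols.

Lemma sat_tuple_is {L} (M : structure L) k s e :
  sat (expand_names M) e (tuple_is (dom M) k s) <-> forall i, i < k -> e i = s i.
Proof.
  induction k; simpl; [split; auto; intros; lia |].
  rewrite IHk; split.
  - intros [Hlow Hk] i Hi.
    destruct (Nat.eq_dec i k) as [-> | ]; [exact Hk | apply Hlow; lia].
  - intros Hall; split; [intros; apply Hall | apply Hall]; lia.
Qed.

Lemma sat_tuple_among {L} (M : structure L) n sols e :
  sat (expand_names M) e (tuple_among (dom M) n sols) <->
  exists s, In s sols /\ forall i, i < n -> e i = s i.
Proof.
  induction sols as [| s sols IH]; simpl.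
  - split; [tauto | intros [s [[] _]]].
  - rewrite IH, sat_tuple_is; split.
    + intros [Hs | [s' [Hs' Hagree]]]; [exists s | exists s']; auto.
    + intros [s' [[<- | Hs'] Hagree]]; [left | right; exists s']; auto.
Qed.

Lemma fv_in_tuple_among {L} (D : Type) n sols :
  fv_in (fun j => j < n) (tuple_among (L := L) D n sols).
Proof.
  assert (Htuple : forall s k, k <= n -> fv_in (fun j => j < n) (tuple_is (L := L) D k s)).
  { intro s; induction k; simpl; auto; intros; split; [apply IHk | intros _; simpl]; lia. }
  induction sols; simpl; auto.
Qed.

Lemma tuple_among_unary {L} (D : Type) n sols :
  bool_comb (has_n_free_vars 1) (tuple_among (L := L) D n sols).
Proof.
  induction sols as [| s sols IH]; simpl; [apply bc_fal | apply bc_or; auto].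
  clear IH; induction n; simpl; [apply bc_tru | apply bc_and; auto].
  apply bc_atom; exists [n]; simpl; auto.
Qed.

Lemma list_filter_prop {A} (S : A -> Prop) (l : list A) :
  exists l', forall x, In x l' <-> In x l /\ S x.
Proof.
  induction l as [| a l [l' Hl']]; [exists []; simpl; tauto |].
  destruct (classic (S a)) as [Ha | Ha]; [exists (a :: l') | exists l'];
    intro x; simpl; rewrite Hl'; split; intuition congruence.
Qed.

Lemma bool_comb_mono {L} (A B : formula L -> Prop) phi :
  (forall psi, A psi -> B psi) -> bool_comb A phi -> bool_comb B phi.
Proof.
  intros HAB; induction 1;
    [apply bc_atom | apply bc_fal | apply bc_tru | apply bc_not
    | apply bc_and | apply bc_or | apply bc_imp]; auto.
Qed.

Lemma aritizable_mono {L} m n (T : theory L) phi :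
  m <= n -> aritizable m T phi -> aritizable n T phi.
Proof.
  intros Hmn [E [T' [psi [HT' [Hext [Hpsi Hequiv]]]]]].
  exists E, T', psi; split; [exact HT' | split; [exact Hext | split; [| exact Hequiv]]].
  apply (bool_comb_mono (has_n_free_vars m)); [| exact Hpsi].
  intros th [l [Hl Hfv]]; exists l; split; [lia | exact Hfv].
Qed.

Lemma finite_solutions_unarizable {L} (T : theory L) n (phi : formula L)
    (M : structure L) (sols : list (nat -> dom M)) :
  (forall s, T s -> sentence s) -> is_model M T ->
  fv_in (fun k => k < n) phi ->
  (forall e, sat M e phi -> exists s, In s sols /\ forall i, i < n -> e i = s i) ->
  aritizable 1 T phi.
Proof.
  intros HT HM Hfv Hsols.
  destruct (list_filter_prop (fun s => sat M s phi) sols) as [sols' Hsols'].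
  exists (names (dom M)), (theory_of (expand_names M)), (tuple_among (dom M) n sols').
  split; [apply theory_of_complete |].
  split; [apply theory_of_expand_extends; assumption |].
  split; [apply tuple_among_unary |].
  apply equiv_in_theory_of with n; [apply fv_in_flift, Hfv | apply fv_in_tuple_among |].
  intro e; rewrite sat_tuple_among; unfold expand_names; rewrite sat_flift; split.
  - intros He; destruct (Hsols e He) as [s [Hs Hagree]]; exists s; split; auto.
    apply Hsols'; split; auto.
    exact (proj1 (sat_fv_agree M phi _ e s Hfv Hagree) He).
  - intros [s [Hs Hagree]]; apply Hsols' in Hs as [_ Hs].
    exact (proj2 (sat_fv_agree M phi _ e s Hfv Hagree) Hs).
Qed.

Theorem proposition2p3 (L : language) (T : theory L) (n : nat)
  (phi : formula L) :
  complete T ->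
  fv_in (fun k => k < n) phi ->
  (exists M : structure L, is_model M T /\
     exists sols : list (nat -> dom M),
       forall e, sat M e phi ->
         exists e', In e' sols /\ forall i, i < n -> e i = e' i) ->
  binarizable T phi.
Proof.
  intros [HT _] Hfv [M [HM [sols Hsols]]].
  apply aritizable_mono with 1; [auto |].
  exact (finite_solutions_unarizable T n phi M sols HT HM Hfv Hsols).
Qed.
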